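(* Let $R$ be an artinian ring and $\mathcal{S}$ a full subcategory of $\operatorname{Mod}R$ which is closed under direct sums and submodules and contains $R_R$, such that $\mathcal{S}$ has only finitely many indecomposable finitely generated objects up to isomorphism, say $M_1,\dots,M_n$. Let $M=M_1\oplus\cdots\oplus M_n$, $E=\operatorname{End}(M_R)$ (so $M$ is an $E$-$R$-bimodule), and $X\in\mathcal{S}$. Then the evaluation map $\lambda:\operatorname{Hom}_R(M,X)\otimes_E M\to X$, $\varphi\otimes m\mapsto\varphi(m)$, is an isomorphism of right $R$-modules.
   Context: $\operatorname{Hom}_R(M,X)$ is a right $E$-module via $(\varphi\cdot s)(m)=\varphi(s(m))$. *)

(* Right R-modules are modelled as left R^c-modules
   (lmodType R^c), where R^c is the converse ring of R: a *: v means v·a. *)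
From HB Require Import structures.
From mathcomp Require Import all_boot all_order all_algebra.
From Stdlib Require Lists.List.

Set Implicit Arguments.
Unset Strict Implicit.
Unset Printing Implicit Defensive.

Import GRing.Theory.
Local Open Scope ring_scope.

Definition is_right_ideal (R : nzRingType) (I : R -> Prop) : Prop :=
  [/\ I 0, (forall x y, I x -> I y -> I (x - y)) & (forall x r, I x -> I (x * r))].

Definition is_left_ideal (R : nzRingType) (I : R -> Prop) : Prop :=
  [/\ I 0, (forall x y, I x -> I y -> I (x - y)) & (forall x r, I x -> I (r * x))].

Definition right_artinian (R : nzRingType) : Prop :=
  forall I : nat -> R -> Prop, (forall n, is_right_ideal (I n)) ->
    (forall n x, I n.+1 x -> I n x) ->
    exists N, forall n, (N <= n)%N -> forall x, I N x -> I n x.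

Definition left_artinian (R : nzRingType) : Prop :=
  forall I : nat -> R -> Prop, (forall n, is_left_ideal (I n)) ->
    (forall n x, I n.+1 x -> I n x) ->
    exists N, forall n, (N <= n)%N -> forall x, I N x -> I n x.

Definition artinian (R : nzRingType) : Prop := right_artinian R /\ left_artinian R.

Notation rmodType R := (lmodType R^c).

Notation regular_rmod R := ((R^c)^o : lmodType R^c).

Definition is_hom (R : nzRingType) (U V : rmodType R) (f : U -> V) : Prop :=
  (forall u v, f (u + v) = f u + f v) /\ (forall (a : R^c) u, f (a *: u) = a *: f u).

Definition isomorphic (R : nzRingType) (U V : rmodType R) : Prop :=
  exists f : U -> V, is_hom f /\ bijective f.

Definition submodule (R : nzRingType) (U : rmodType R) (A : U -> Prop) : Prop :=
  [/\ A 0, (forall u v, A u -> A v -> A (u + v)), (forall u, A u -> A (- u))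
    & (forall (a : R^c) u, A u -> A (a *: u))].

Definition indecomposable (R : nzRingType) (U : rmodType R) : Prop :=
  (exists u : U, u <> 0) /\
  forall A B : U -> Prop, submodule A -> submodule B ->
    (forall u, exists a b, [/\ A a, B b & u = a + b]) ->
    (forall u, A u -> B u -> u = 0) ->
    (forall a, A a -> a = 0) \/ (forall b, B b -> b = 0).

Definition fin_gen (R : nzRingType) (U : rmodType R) : Prop :=
  exists s : seq U, forall u : U, exists c : seq R^c,
    u = \sum_(i < size s) c`_i *: s`_i.

Definition is_dsum (R : nzRingType) (I : Type) (Y : I -> rmodType R)
    (X : rmodType R) (f : forall i, Y i -> X) : Prop :=
  [/\ (forall i, is_hom (f i)),
      (forall x : X, exists s : seq {i : I & Y i},
          x = \sum_(p <- s) f (tag p) (tagged p))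
    & (forall s : seq {i : I & Y i}, List.NoDup (map tag s) ->
          \sum_(p <- s) f (tag p) (tagged p) = 0 ->
          forall p, List.In p s -> tagged p = 0)].

Definition HomR (R : nzRingType) (M X : rmodType R) := {phi : M -> X | is_hom phi}.

(* Hom_R(M,X) ⊗_E M is the abelian group generated by symbols phi ⊗ m subject
   to biadditivity and E-balancedness ((phi·s) ⊗ m = phi ⊗ (s m), where
   (phi·s)(m) = phi(s(m))).  An element is represented by a finite list of
   pure tensors (a formal sum); [teq] is the congruence generated by the
   defining relations, so the tensor product is (seq _) / teq. *)
Inductive teq (R : nzRingType) (M X : rmodType R) :
    seq (HomR M X * M) -> seq (HomR M X * M) -> Prop :=
  | teq_refl l : teq l l
  | teq_sym l l' : teq l l' -> teq l' l
  | teq_trans l1 l2 l3 : teq l1 l2 -> teq l2 l3 -> teq l1 l3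
  | teq_cat l1 l1' l2 l2' : teq l1 l1' -> teq l2 l2' -> teq (l1 ++ l2) (l1' ++ l2')
  | teq_comm l1 l2 : teq (l1 ++ l2) (l2 ++ l1)
  | teq_addl (p q r : HomR M X) (m : M) :
      (forall x, sval r x = sval p x + sval q x) ->
      teq [:: (r, m)] [:: (p, m); (q, m)]
  | teq_addr (p : HomR M X) (m m' : M) : teq [:: (p, m + m')] [:: (p, m); (p, m')]
  | teq_zerol (p : HomR M X) (m : M) : (forall x, sval p x = 0) -> teq [:: (p, m)] [::]
  | teq_zeror (p : HomR M X) : teq [:: (p, 0)] [::]
  | teq_bal (p q : HomR M X) (s : M -> M) (m : M) :
      is_hom s -> (forall x, sval q x = sval p (s x)) ->
      teq [:: (q, m)] [:: (p, s m)].

Definition tscale (R : nzRingType) (M X : rmodType R) (r : R^c)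
    (l : seq (HomR M X * M)) : seq (HomR M X * M) :=
  map (fun pm => (pm.1, r *: pm.2)) l.

Definition tensor_eval (R : nzRingType) (M X : rmodType R)
    (l : seq (HomR M X * M)) : X :=
  \sum_(pm <- l) sval pm.1 pm.2.

From HB Require Import structures.
From mathcomp Require Import all_boot all_order all_algebra.
From mathcomp Require Import boolp.
From Stdlib Require Import ClassicalEpsilon.

Set Implicit Arguments.
Unset Strict Implicit.
Unset Printing Implicit Defensive.

Import GRing.Theory.
Local Open Scope ring_scope.

(* Call a submodule D of X M-split when its inclusion into X factors through a
   finite direct sum of copies of M: x = sum_k e_k (p_k x) with e_k in Hom(M, X)
   and p_k : D -> M linear.  If a finitely generated D containing the images of
   all homomorphisms occurring in a tensor l is M-split, balancedness rewrites
   l into the normal form sum_k e_k (x) p_k (lambda l), which depends only on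
   lambda l; so lambda is injective.  Every finitely generated submodule of X
   is M-split: an indecomposable one lies in S, hence is isomorphic to some M_i
   and splits through the projection M -> M_i; M-split submodules are closed
   under direct sums; and a decomposable one splits into two proper finitely
   generated summands, so the descending chain condition for finitely
   generated modules over the right artinian ring R gives the induction. *)

Lemma InP (T : eqType) (x : T) (s : seq T) : reflect (List.In x s) (x \in s).
Proof.
elim: s => [|y s IH] /=; first by right.
rewrite inE; apply: (iffP orP) => [[/eqP ->|/IH]|[->|/IH]]; by [left | right | rewrite eqxx].
Qed.

Lemma map_f_In (A : Type) (B : eqType) (f : A -> B) (s : seq A) a :
  List.In a s -> f a \in map f s.
Proof. by elim: s => //= b s IH [->|/IH]; rewrite inE ?eqxx // => ->; rewrite orbT. Qed.

Lemma uniq_NoDup (T : eqType) (s : seq T) : uniq s -> List.NoDup s.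
Proof.
elim: s => [|x s IH] /=; first by constructor.
by move=> /andP [xs us]; constructor; [move/InP; apply/negP | apply: IH].
Qed.

Lemma eq_big_In (I : Type) (V : zmodType) (r : seq I) (F G : I -> V) :
  (forall i, List.In i r -> F i = G i) -> \sum_(i <- r) F i = \sum_(i <- r) G i.
Proof.
elim: r => [|i r IH] FG; first by rewrite !big_nil.
by rewrite !big_cons FG ?IH //; [move=> j ?; apply: FG; right | left].
Qed.

Section Homomorphisms.
Variables (R : nzRingType) (U V W : rmodType R).

Section Hom.
Variables (f : U -> V) (hf : is_hom f).

Lemma hom0 : f 0 = 0.
Proof. by apply: (addrI (f 0)); rewrite -hf.1 !addr0. Qed.

Lemma homN x : f (- x) = - f x.
Proof. by apply/eqP; rewrite -subr_eq0 opprK -hf.1 addNr hom0. Qed.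

Lemma homB x y : f (x - y) = f x - f y.
Proof. by rewrite hf.1 homN. Qed.

Lemma hom_sum (I : Type) (r : seq I) (F : I -> U) :
  f (\sum_(i <- r) F i) = \sum_(i <- r) f (F i).
Proof. exact: (big_morph f hf.1 hom0). Qed.

End Hom.

Lemma hom_comp (f : U -> V) (g : V -> W) : is_hom f -> is_hom g -> is_hom (g \o f).
Proof. by move=> [f1 f2] [g1 g2]; split=> *; rewrite /= ?f1 ?g1 ?f2 ?g2. Qed.

Lemma hom_inv (f : U -> V) (g : V -> U) : is_hom f -> cancel f g -> cancel g f -> is_hom g.
Proof. by move=> hf fK gK; split=> [u v|a u]; apply: (can_inj fK); rewrite ?hf.1 ?hf.2 !gK. Qed.

End Homomorphisms.

Section Submodules.
Variables (R : nzRingType) (V : rmodType R) (A : V -> Prop) (sA : submodule A).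

Lemma submod0 : A 0. Proof. by case: sA. Qed.
Lemma submodD u v : A u -> A v -> A (u + v). Proof. by case: sA => _ h _ _; apply: h. Qed.
Lemma submodN u : A u -> A (- u). Proof. by case: sA => _ _ h _; apply: h. Qed.
Lemma submodZ (a : R^c) u : A u -> A (a *: u). Proof. by case: sA => _ _ _ h; apply: h. Qed.
Lemma submodB u v : A u -> A v -> A (u - v).
Proof. by move=> hu hv; apply: submodD hu (submodN hv). Qed.

Lemma submod_sum (I : Type) (r : seq I) (F : I -> V) :
  (forall i, List.In i r -> A (F i)) -> A (\sum_(i <- r) F i).
Proof.
elim: r => [|a r IH] hF; first by rewrite big_nil; apply: submod0.
by rewrite big_cons; apply: submodD; [apply: hF; left | apply: IH => i hi; apply: hF; right].
Qed.

Lemma submod_ext (B : V -> Prop) : (forall x, A x <-> B x) -> submodule B.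
Proof.
move=> AB; split=> [|u v|u|a u].
- by apply/AB; apply: submod0.
- by move=> /AB hu /AB hv; apply/AB/submodD.
- by move=> /AB hu; apply/AB/submodN.
- by move=> /AB hu; apply/AB/submodZ.
Qed.

End Submodules.

Lemma submodI (R : nzRingType) (V : rmodType R) (A B : V -> Prop) :
  submodule A -> submodule B -> submodule (fun x => A x /\ B x).
Proof.
move=> sA sB; split=> [|u v [? ?] [? ?]|u [? ?]|a u [? ?]].
- by split; [apply: (submod0 sA) | apply: (submod0 sB)].
- by split; [apply: (submodD sA) | apply: (submodD sB)].
- by split; [apply: (submodN sA) | apply: (submodN sB)].
- by split; [apply: (submodZ sA) | apply: (submodZ sB)].
Qed.

Lemma submod_image (R : nzRingType) (U V : rmodType R) (f : U -> V) (A : U -> Prop) :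
  is_hom f -> submodule A -> submodule (fun x => exists2 a, A a & f a = x).
Proof.
move=> hf sA; split.
- by exists 0; [apply: submod0 | apply: hom0].
- by move=> _ _ [a ha <-] [b hb <-]; exists (a + b); [apply: submodD | rewrite hf.1].
- by move=> _ [a ha <-]; exists (- a); [apply: submodN | rewrite (homN hf)].
- by move=> c _ [a ha <-]; exists (c *: a); [apply: submodZ | rewrite hf.2].
Qed.

Section Span.
Variables (R : nzRingType) (V : rmodType R).

Definition rspan (t : seq V) (x : V) : Prop :=
  exists c : seq R^c, x = \sum_(i < size t) c`_i *: t`_i.

Definition fg_submod (D : V -> Prop) : Prop := exists t, forall x, D x <-> rspan t x.

Lemma rspan_submod (t : seq V) : submodule (rspan t).
Proof.
split.
- by exists [::]; rewrite big1 // => i _; rewrite nth_nil scale0r.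
- move=> _ _ [c1 ->] [c2 ->]; exists (mkseq (fun i => c1`_i + c2`_i) (size t)).
  by rewrite -big_split; apply: eq_bigr => i _; rewrite nth_mkseq // scalerDl.
- move=> _ [c ->]; exists (mkseq (fun i => - c`_i) (size t)).
  by rewrite -sumrN; apply: eq_bigr => i _; rewrite nth_mkseq // scaleNr.
- move=> a _ [c ->]; exists (mkseq (fun i => a * c`_i) (size t)).
  by rewrite scaler_sumr; apply: eq_bigr => i _; rewrite nth_mkseq // scalerA.
Qed.

Lemma fg_submodP (D : V -> Prop) : fg_submod D -> submodule D.
Proof. by move=> [t ht]; apply: (submod_ext (rspan_submod t)) => x; apply: iff_sym. Qed.

Lemma rspan_mem (t : seq V) x : x \in t -> rspan t x.
Proof.
move=> xt; have it : (index x t < size t)%N by rewrite index_mem.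
exists (mkseq (fun i => if i == index x t then 1 else 0) (size t)).
rewrite (bigD1 (Ordinal it)) //= nth_mkseq // eqxx scale1r nth_index // big1 ?addr0 //.
move=> i /eqP ne; rewrite nth_mkseq //; case: eqP => [e|]; last by rewrite scale0r.
by case: ne; apply: val_inj.
Qed.

Lemma rspan_min (A : V -> Prop) (t : seq V) :
  submodule A -> (forall x, x \in t -> A x) -> forall x, rspan t x -> A x.
Proof.
move=> sA ht _ [c ->]; apply: submod_sum => // i _.
by apply: submodZ => //; apply: ht; apply: mem_nth.
Qed.

Lemma rspan_subset (t t' : seq V) x : {subset t <= t'} -> rspan t x -> rspan t' x.
Proof. by move=> tt'; apply: rspan_min => [|y /tt']; [apply: rspan_submod | apply: rspan_mem]. Qed.

Lemma rspan_cons (y : V) (t : seq V) x :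
  rspan (y :: t) x -> exists r z, rspan t z /\ x = r *: y + z.
Proof.
move=> [c ->]; exists c`_0, (\sum_(i < size t) c`_i.+1 *: t`_i); split.
  by exists (behead c); apply: eq_bigr => i _; rewrite nth_behead.
by rewrite big_ord_recl.
Qed.

End Span.

Lemma rspan_hom (R : nzRingType) (V W : rmodType R) (f : V -> W) (t : seq V) x :
  is_hom f -> rspan t x -> rspan (map f t) (f x).
Proof.
move=> hf [c ->]; exists c; rewrite size_map (hom_sum hf); apply: eq_bigr => i _.
by rewrite hf.2 (nth_map 0) // hom0.
Qed.

Definition hom_on (R : nzRingType) (U V : rmodType R) (D : U -> Prop) (p : U -> V) :=
  (forall x y, D x -> D y -> p (x + y) = p x + p y) /\
  (forall a x, D x -> p (a *: x) = a *: p x).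

Lemma hom_on0 (R : nzRingType) (U V : rmodType R) (D : U -> Prop) (p : U -> V) :
  submodule D -> hom_on D p -> p 0 = 0.
Proof. by move=> sD [pD _]; apply: (addrI (p 0)); rewrite -pD ?addr0 //; apply: submod0. Qed.

Section SubmoduleType.
Variables (R : nzRingType) (V : rmodType R) (A : V -> Prop).

Definition subm_of (sA : submodule A) : Type := {x : V | `[< A x >]}.

Variable sA : submodule A.
Local Notation subm := (subm_of sA).

Lemma subm_closed : subsemimod_closed (fun x : V => `[< A x >]).
Proof.
split; first split.
- by apply/asboolP; apply: submod0.
- by move=> u v /asboolP hu /asboolP hv; apply/asboolP; apply: submodD.
- by move=> a u /asboolP hu; apply/asboolP; apply: submodZ.
Qed.

HB.instance Definition _ := SubChoice.on subm.
HB.instance Definition _ := GRing.SubChoice_isSubLmodule.Build _ _ _ subm subm_closed.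

Lemma val_hom : is_hom (val : subm -> V).
Proof. by split=> [u v|a u]; [exact: raddfD | exact: linearZ]. Qed.

Lemma subm_mem (u : subm) : A (val u).
Proof. by case: u => x ax; apply/asboolP. Qed.

Definition to_subm (x : V) : subm := epsilon (inhabits 0) (fun u : subm => val u = x).

Lemma to_submK x : A x -> val (to_subm x) = x.
Proof.
move=> ax; apply: (epsilon_spec (inhabits 0) (fun u : subm => val u = x)).
have ax' : `[< A x >] by apply/asboolP.
by exists (exist _ x ax').
Qed.

Lemma to_submD x y : A x -> A y -> to_subm (x + y) = to_subm x + to_subm y.
Proof.
by move=> ax ay; apply: val_inj; rewrite val_hom.1 !to_submK //; apply: submodD.
Qed.

Lemma to_submZ (a : R^c) x : A x -> to_subm (a *: x) = a *: to_subm x.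
Proof. by move=> ax; apply: val_inj; rewrite val_hom.2 !to_submK //; apply: submodZ. Qed.

Lemma subm_fin_gen t : (forall x, A x <-> rspan t x) -> fin_gen subm.
Proof.
move=> At; exists (map to_subm t) => u.
have [c e] : rspan t (val u) by apply/At; apply: subm_mem.
exists c; apply: val_inj; rewrite e (hom_sum val_hom) size_map.
apply: eq_bigr => i _; rewrite val_hom.2 (nth_map 0) // to_submK //.
by apply/At; apply: rspan_mem; apply: mem_nth.
Qed.

End SubmoduleType.

Section Chains.
Variable T : Type.

Definition descending (C : nat -> T -> Prop) := forall n x, C n.+1 x -> C n x.

Definition stationary (C : nat -> T -> Prop) :=
  exists N, forall n, (N <= n)%N -> forall x, C N x -> C n x.

Lemma descending_mono C : descending C ->
  forall m n, (m <= n)%N -> forall x, C n x -> C m x.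
Proof.
move=> dC m n /subnK <-; elim: (n - m)%N => [|k IH] x //.
by rewrite addSn => /dC /IH.
Qed.

Definition proper_sub (D' D : T -> Prop) := (forall x, D' x -> D x) /\ exists2 x, D x & ~ D' x.

End Chains.

Section Artinian.
Variables (R : nzRingType) (V : rmodType R).

Definition lead_ideal (C : V -> Prop) (y : V) (t : seq V) (r : R) : Prop :=
  exists c z : V, [/\ C c, rspan t z & (r : R^c) *: y = c + z].

Lemma lead_ideal_right_ideal C y t : submodule C -> is_right_ideal (lead_ideal C y t).
Proof.
move=> sC; have st := rspan_submod t; split.
- by exists 0, 0; rewrite scale0r addr0; split=> //; apply: submod0.
- move=> a b [c1 [z1 [h1 h1' e1]]] [c2 [z2 [h2 h2' e2]]].
  exists (c1 - c2), (z1 - z2); split; [exact: submodB | exact: submodB |].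
  by rewrite (scalerBl (a : R^c)) e1 e2 opprD addrACA.
- move=> a r [c [z [h h' e]]]; exists ((r : R^c) *: c), ((r : R^c) *: z).
  by split; [exact: submodZ | exact: submodZ | rewrite -scalerDr -e scalerA].
Qed.

(* Induction on the generators [y :: t]: the coefficients of [y] give a descending chain
   of right ideals of [R], and the rest of the chain lives in [rspan t]. *)
Lemma rspan_dcc : right_artinian R -> forall (t : seq V) (C : nat -> V -> Prop),
  (forall n, submodule (C n)) -> (forall n x, C n x -> rspan t x) ->
  descending C -> stationary C.
Proof.
move=> art; elim=> [|y t IH] C sC Ct dC.
  by exists 0%N => n _ x /Ct [c ->]; rewrite big_ord0; apply: submod0.
pose J n := lead_ideal (C n) y t.
have dJ : descending J.
  by move=> n r [c [z [? ? ?]]]; exists c, z; split => //; apply: dC.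
have [N1 HN1] := art J (fun n => lead_ideal_right_ideal y t (sC n)) dJ.
pose C' n x := C n x /\ rspan t x.
have dC' : descending C' by move=> n x [/dC ? ?].
have [N2 HN2] := IH C' (fun n => submodI (sC n) (rspan_submod t)) (fun n x h => h.2) dC'.
have st := rspan_submod t.
exists (maxn N1 N2) => n hn x hx; move: (hn); rewrite geq_max => /andP [hn1 hn2].
have [r [z [hz ex]]] := rspan_cons (Ct _ _ hx).
have JN : J N1 r.
  apply: (descending_mono dJ (leq_maxl N1 N2)).
  by exists x, (- z); split; [| apply: submodN | rewrite ex addrK].
have [c [z' [hc hz' e]]] := HN1 n hn1 r JN.
have hd : C' N2 (x - c).
  apply: (descending_mono dC' (leq_maxr N1 N2)); split.
    by apply: submodB => //; apply: (descending_mono dC hn).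
  have -> : x - c = z + z' by rewrite ex e addrC addrA addKr addrC.
  exact: submodD.
by rewrite -(subrK c x); apply: (submodD (sC n)); [case: (HN2 n hn2 _ hd) |].
Qed.

Lemma fg_submod_ind (P : (V -> Prop) -> Prop) : right_artinian R ->
  (forall D, fg_submod D -> (forall D', fg_submod D' -> proper_sub D' D -> P D') -> P D) ->
  forall D, fg_submod D -> P D.
Proof.
move=> art IH D0 fD0; apply: contrapT => nPD0.
pose bad D := fg_submod D /\ ~ P D.
have next D : bad D -> exists D', bad D' /\ proper_sub D' D.
  move=> [fD nPD]; apply: contrapT => nD'; apply/nPD/IH => // D' fD' D'D.
  by apply: contrapT => nPD'; apply: nD'; exists D'.
pose C k := iter k (fun D => epsilon (inhabits D) (fun D' => bad D' /\ proper_sub D' D)) D0.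
have Cbad k : bad (C k).
  by elim: k => [|k bk] //; exact: (epsilon_spec _ _ (next _ bk)).1.
have Cnext k : proper_sub (C k.+1) (C k) by exact: (epsilon_spec _ _ (next _ (Cbad k))).2.
have dC : descending C by move=> k; apply: (Cnext k).1.
have [t0 D0t0] := fD0.
have Ct0 k x : C k x -> rspan t0 x by move/(descending_mono dC (leq0n k))/D0t0.
have [N CN] := rspan_dcc art (fun k => fg_submodP (Cbad k).1) Ct0 dC.
by have [_ [x CNx]] := Cnext N; apply; apply: CN.
Qed.

End Artinian.

Section InternalSum.
Variables (R : nzRingType) (V : rmodType R).

Definition dsum (A B : V -> Prop) (x : V) := exists a b, [/\ A a, B b & x = a + b].

Definition dsum_proj (A B : V -> Prop) (x : V) : V :=
  epsilon (inhabits 0) (fun a => A a /\ exists2 b, B b & x = a + b).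

Lemma dsumC A B x : dsum A B x -> dsum B A x.
Proof. by move=> [a [b [ha hb ->]]]; exists b, a; rewrite addrC. Qed.

Lemma dsum_submod A B : submodule A -> submodule B -> submodule (dsum A B).
Proof.
move=> sA sB; split.
- by exists 0, 0; rewrite addr0; split=> //; apply: submod0.
- move=> _ _ [a [b [ha hb ->]]] [a' [b' [ha' hb' ->]]]; exists (a + a'), (b + b').
  by rewrite addrACA; split=> //; apply: submodD.
- move=> _ [a [b [ha hb ->]]]; exists (- a), (- b).
  by rewrite opprD; split=> //; apply: submodN.
- move=> c _ [a [b [ha hb ->]]]; exists (c *: a), (c *: b).
  by rewrite scalerDr; split=> //; apply: submodZ.
Qed.

Variables (A B : V -> Prop).
Hypotheses (sA : submodule A) (sB : submodule B) (AB0 : forall x, A x -> B x -> x = 0).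

Lemma dsum_projP x : dsum A B x ->
  A (dsum_proj A B x) /\ exists2 b, B b & x = dsum_proj A B x + b.
Proof.
move=> [a [b [ha hb e]]].
apply: (epsilon_spec _ (fun a => A a /\ exists2 b, B b & x = a + b)).
by exists a; split=> //; exists b.
Qed.

Lemma dsum_proj_eq x a b : A a -> B b -> x = a + b -> dsum_proj A B x = a.
Proof.
move=> ha hb e; have hx : dsum A B x by exists a, b.
have [ha' [b' hb' e']] := dsum_projP hx.
have h : dsum_proj A B x + b' = a + b by rewrite -e' -e.
apply/eqP; rewrite -subr_eq0; apply/eqP; apply: AB0; first exact: submodB.
have -> : dsum_proj A B x - a = b - b'.
  by apply/eqP; rewrite subr_eq addrAC [b + a]addrC -h addrK.
exact: submodB.
Qed.

Lemma dsum_proj_id a : A a -> dsum_proj A B a = a.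
Proof. by move=> ha; apply: (dsum_proj_eq (b := 0)); rewrite ?addr0 //; apply: submod0. Qed.

Lemma dsum_projD x y : dsum A B x -> dsum A B y ->
  dsum_proj A B (x + y) = dsum_proj A B x + dsum_proj A B y.
Proof.
move=> /dsum_projP [ha1 [b1 hb1 e1]] /dsum_projP [ha2 [b2 hb2 e2]].
apply: (dsum_proj_eq (b := b1 + b2)); [exact: submodD | exact: submodD |].
by rewrite {1}e1 {1}e2 addrACA.
Qed.

Lemma dsum_projZ (c : R^c) x : dsum A B x -> dsum_proj A B (c *: x) = c *: dsum_proj A B x.
Proof.
move=> /dsum_projP [ha [b hb e]].
apply: (dsum_proj_eq (b := c *: b)); [exact: submodZ | exact: submodZ |].
by rewrite {1}e scalerDr.
Qed.

Lemma dsum_proj0 : dsum_proj A B 0 = 0.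
Proof. by apply: dsum_proj_id; apply: submod0. Qed.

Lemma dsum_proj_sum (I : Type) (r : seq I) (F : I -> V) :
  (forall i, dsum A B (F i)) ->
  dsum_proj A B (\sum_(i <- r) F i) = \sum_(i <- r) dsum_proj A B (F i).
Proof.
move=> hF; elim: r => [|i r IH]; first by rewrite !big_nil dsum_proj0.
rewrite !big_cons dsum_projD ?IH //.
by apply: submod_sum => [|j _]; [apply: dsum_submod | apply: hF].
Qed.

Lemma dsum_proj_rspan (t : seq V) : (forall x, rspan t x <-> dsum A B x) ->
  forall x, A x <-> rspan (map (dsum_proj A B) t) x.
Proof.
move=> tAB x; have tD (i : 'I_(size t)) : dsum A B t`_i.
  by apply/tAB; apply: rspan_mem; apply: mem_nth.
split; last first.
  apply: rspan_min => // _ /mapP [y yt ->].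
  by have [] := dsum_projP (proj1 (tAB y) (rspan_mem yt)).
move=> ax; rewrite -(dsum_proj_id ax).
have [c ->] : rspan t x by apply/tAB; exists x, 0; rewrite addr0; split=> //; apply: submod0.
exists c; rewrite size_map dsum_proj_sum => [|i]; last exact: (submodZ (dsum_submod sA sB)).
by apply: eq_bigr => i _; rewrite dsum_projZ // (nth_map 0).
Qed.

End InternalSum.

Lemma dsum_projE (R : nzRingType) (V : rmodType R) (A B : V -> Prop) :
  submodule A -> submodule B -> (forall x, A x -> B x -> x = 0) ->
  forall x, dsum A B x -> x = dsum_proj A B x + dsum_proj B A x.
Proof.
move=> sA sB AB0 x hx; have [ha [b hb e]] := dsum_projP hx.
have BA0 y : B y -> A y -> y = 0 by move=> *; apply: AB0.
by rewrite (dsum_proj_eq sB sA BA0 (b := dsum_proj A B x) hb ha) // addrC.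
Qed.

Section Coordinates.
Variables (R : nzRingType) (n : nat) (Ms : 'I_n -> rmodType R) (M : rmodType R).
Variables (iota : forall i, Ms i -> M) (hd : is_dsum iota).

Definition tcoord (i : 'I_n) (p : {j : 'I_n & Ms j}) : Ms i :=
  tagged_as (Tagged Ms (0 : Ms i)) p.

Lemma tcoordE i (y : Ms i) : tcoord i (Tagged Ms y) = y.
Proof. exact: (@tagged_asE _ _ (Tagged Ms (0 : Ms i)) y). Qed.

Lemma tcoord_other i p : tag p != i -> tcoord i p = 0.
Proof. by move=> ne; rewrite /tcoord /tagged_as /=; case: eqP => // e; rewrite e eqxx in ne. Qed.

Lemma tcoordZ i (a : R^c) (p : {j : 'I_n & Ms j}) :
  tcoord i (Tagged Ms (a *: tagged p)) = a *: tcoord i p.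
Proof.
case: p => j y; have [e|ij] := eqVneq j i; first by subst; rewrite !tcoordE.
by rewrite !tcoord_other ?scaler0.
Qed.

Lemma iota_hom (i : 'I_n) : is_hom (@iota i).
Proof. by case: hd. Qed.

Definition dsum_val (s : seq {j : 'I_n & Ms j}) : M := \sum_(p <- s) iota (tagged p).

Definition scoord (i : 'I_n) (s : seq {j : 'I_n & Ms j}) : Ms i := \sum_(p <- s) tcoord i p.

Lemma sum_scoord s : \sum_j iota (scoord j s) = dsum_val s.
Proof.
rewrite /dsum_val /scoord; under eq_bigr do rewrite (hom_sum (iota_hom _)).
rewrite exchange_big /=; apply: eq_bigr => p _.
rewrite (bigD1 (tag p)) //= big1 ?addr0; first by case: p => j y; rewrite tcoordE.
by move=> j jp; rewrite tcoord_other 1?eq_sym // (hom0 (iota_hom j)).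
Qed.

Lemma scoord_unique s s' i : dsum_val s = dsum_val s' -> scoord i s = scoord i s'.
Proof.
move=> e; pose d := [seq Tagged Ms (scoord j s - scoord j s') | j <- index_enum 'I_n].
have nd : List.NoDup (map tag d).
  by rewrite -map_comp map_id; apply: uniq_NoDup; apply: index_enum_uniq.
have d0 : \sum_(p <- d) iota (tagged p) = 0.
  rewrite big_map /= (eq_bigr _ (fun j _ => homB (iota_hom j) _ _)) sumrB.
  by rewrite !sum_scoord e subrr.
apply/eqP; rewrite -subr_eq0; apply/eqP.
case: hd => _ _ /(_ d nd d0 (Tagged Ms (scoord i s - scoord i s'))); apply.
by apply/List.in_map_iff; exists i; split=> //; apply/InP; apply: mem_index_enum.
Qed.

Definition coord (i : 'I_n) (m : M) : Ms i :=
  scoord i (epsilon (inhabits [::]) (fun s => m = dsum_val s)).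

Lemma coord_eq i m s : m = dsum_val s -> coord i m = scoord i s.
Proof.
move=> e; apply: scoord_unique; rewrite -e; symmetry.
by apply: (epsilon_spec _ (fun s => m = dsum_val s)); exists s.
Qed.

Lemma coord_hom i : is_hom (coord i).
Proof.
have [_ ex _] := hd; split=> [u v|a u].
  have [s1 e1] := ex u; have [s2 e2] := ex v.
  rewrite (coord_eq i e1) (coord_eq i e2) (coord_eq i (s := s1 ++ s2)) ?/scoord ?big_cat //.
  by rewrite /dsum_val big_cat e1 e2.
have [s e] := ex u.
have esa : a *: u = dsum_val [seq Tagged Ms (a *: tagged p) | p : {j : 'I_n & Ms j} <- s].
  rewrite /dsum_val big_map e scaler_sumr; apply: eq_bigr => p _.
  by rewrite (iota_hom _).2.
rewrite (coord_eq i e) (coord_eq i esa) /scoord big_map scaler_sumr.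
by apply: eq_bigr => p _; apply: tcoordZ.
Qed.

Lemma coord_iota i y : coord i (iota y) = y.
Proof. by rewrite (coord_eq i (s := [:: Tagged Ms y])) /scoord /dsum_val !big_seq1 ?tcoordE. Qed.

End Coordinates.

Lemma dsum_fin_gen (R : nzRingType) (n : nat) (Ms : 'I_n -> rmodType R) (M : rmodType R)
    (iota : forall i, Ms i -> M) :
  is_dsum iota -> (forall i, fin_gen (Ms i)) -> exists t : seq M, forall m, rspan t m.
Proof.
move=> [iota_hom iota_onto _] fgMs; pose gens i := proj1_sig (cid (fgMs i)).
exists (flatten [seq map (@iota i) (gens i) | i <- index_enum 'I_n]) => m.
have [s ->] := iota_onto m; apply: submod_sum => [|p _]; first exact: rspan_submod.
apply: rspan_subset (rspan_hom (iota_hom (tag p)) (proj2_sig (cid (fgMs (tag p))) _)).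
move=> x xp; apply/flattenP; exists (map (@iota (tag p)) (gens (tag p))) => //.
by apply: (map_f (fun i => map (@iota i) (gens i))); apply: mem_index_enum.
Qed.

Section Split.
Variables (R : nzRingType) (M X : rmodType R).

Definition M_split (D : X -> Prop) := exists E : seq (HomR M X * (X -> M)),
  (forall e, List.In e E -> hom_on D e.2) /\
  (forall x, D x -> x = \sum_(e <- E) sval e.1 (e.2 x)).

Lemma M_split_ext (D D' : X -> Prop) : (forall x, D x <-> D' x) -> M_split D -> M_split D'.
Proof.
move=> DD' [E [hE DE]]; exists E; split=> [e /hE [eD eZ]|x /DD'/DE //].
by split=> [x y /DD' hx /DD' hy|a x /DD' hx]; [apply: eD | apply: eZ].
Qed.

Lemma M_split0 (D : X -> Prop) : (forall x, D x -> x = 0) -> M_split D.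
Proof. by move=> D0; exists [::]; split=> // x /D0 ->; rewrite big_nil. Qed.

Lemma hom_on_comp (A D : X -> Prop) (q : X -> X) (p : X -> M) :
  hom_on A p -> (forall x, D x -> A (q x)) -> hom_on D q -> hom_on D (p \o q).
Proof.
move=> [pD pZ] DA [qD qZ]; split=> [x y Dx Dy|a x Dx] /=.
  by rewrite qD // pD //; apply: DA.
by rewrite qZ // pZ //; apply: DA.
Qed.

Lemma M_split_dsum (A B : X -> Prop) : submodule A -> submodule B ->
  (forall x, A x -> B x -> x = 0) -> M_split A -> M_split B -> M_split (dsum A B).
Proof.
move=> sA sB AB0 [EA [hA EAE]] [EB [hB EBE]].
have BA0 x : B x -> A x -> x = 0 by move=> *; apply: AB0.
have projA : hom_on (dsum A B) (dsum_proj A B).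
  by split=> *; [apply: dsum_projD | apply: dsum_projZ].
have projB : hom_on (dsum A B) (dsum_proj B A).
  by split=> [x y /dsumC hx /dsumC hy|a x /dsumC hx]; [apply: dsum_projD | apply: dsum_projZ].
exists ([seq (e.1, e.2 \o dsum_proj A B) | e <- EA] ++ [seq (e.1, e.2 \o dsum_proj B A) | e <- EB]).
split=> [e /(List.in_app_or _ _ _) [] /(List.in_map_iff _ _ _) [e0 [<- e0E]] /=|x hx].
- by apply: hom_on_comp projA; [apply: hA | move=> x /dsum_projP []].
- by apply: hom_on_comp projB; [apply: hB | move=> x /dsumC /dsum_projP []].
rewrite big_cat !big_map {1}(dsum_projE sA sB AB0 hx) /=; congr (_ + _).
  by apply: EAE; have [] := dsum_projP hx.
by apply: EBE; have [] := dsum_projP (dsumC hx).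
Qed.

End Split.

Lemma fg_not_indecomposable (R : nzRingType) (V : rmodType R) (D : V -> Prop)
    (sD : submodule D) : fg_submod D -> ~ indecomposable (subm_of sD) ->
  (forall x, D x -> x = 0) \/
  exists A B, [/\ fg_submod A /\ proper_sub A D, fg_submod B /\ proper_sub B D,
    forall x, A x -> B x -> x = 0 & forall x, D x <-> dsum A B x].
Proof.
move=> [t Dt]; have vh := val_hom sD.
case/not_andP => [/forallNP nz|].
  left=> x Dx; rewrite -(to_submK sD Dx).
  by have /contrapT -> := nz (to_subm sD x); apply: hom0.
move=> /existsNP [A /existsNP [B]].
move=> /not_implyP [sA /not_implyP [sB /not_implyP [cover /not_implyP [indep]]]].
move=> /not_orP [/existsNP [a0 /not_implyP [Aa0 a0n0]] /existsNP [b0 /not_implyP [Bb0 b0n0]]].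
pose img (C : subm_of sD -> Prop) x := exists2 u, C u & val u = x.
have img_indep (C C' : subm_of sD -> Prop) : (forall u, C u -> C' u -> u = 0) ->
    forall x, img C x -> img C' x -> x = 0.
  move=> CC' x [u Cu <-] [u' C'u' /val_inj u'u].
  by rewrite -u'u in Cu *; rewrite (CC' _ Cu C'u') (hom0 vh).
have img_proper (C C' : subm_of sD -> Prop) u : (forall u, C u -> C' u -> u = 0) ->
    C' u -> u <> 0 -> proper_sub (img C) D.
  move=> CC' C'u un0; split=> [_ [v _ <-]|]; first exact: subm_mem.
  exists (val u); first exact: subm_mem.
  move=> Cu; apply: un0; apply: val_inj; rewrite (hom0 vh).
  by apply: (img_indep C C') => //; exists u.
have BA u : B u -> A u -> u = 0 by move=> *; apply: indep.
have DAB x : D x <-> dsum (img A) (img B) x.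
  split=> [Dx|[_ [_ [[a _ <-] [b _ <-] ->]]]]; last by rewrite -vh.1; apply: subm_mem.
  have [a [b [Aa Bb e]]] := cover (to_subm sD x).
  by exists (val a), (val b); split; [exists a | exists b | rewrite -vh.1 -e to_submK].
have sIA := submod_image vh sA; have sIB := submod_image vh sB.
have tAB x : rspan t x <-> dsum (img A) (img B) x by split=> [/Dt/DAB|/DAB/Dt].
have IAB := img_indep A B indep; have IBA := img_indep B A BA.
right; exists (img A), (img B); split=> //.
  split; last exact: (img_proper A B b0).
  by exists (map (dsum_proj (img A) (img B)) t); apply: (dsum_proj_rspan sIA sIB IAB).
split; last exact: (img_proper B A a0).
exists (map (dsum_proj (img B) (img A)) t); apply: (dsum_proj_rspan sIB sIA IBA) => x.
by split=> [/tAB /dsumC|/dsumC /tAB].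
Qed.

Section FiniteType.
Variables (R : nzRingType) (S : rmodType R -> Prop) (n : nat) (Ms : 'I_n -> rmodType R).
Variables (M : rmodType R) (iota : forall i, Ms i -> M) (X : rmodType R).
Hypothesis S_sub : forall (U V : rmodType R) (f : U -> V),
  is_hom f -> injective f -> S V -> S U.
Hypothesis S_classified : forall Y : rmodType R,
  S Y -> indecomposable Y -> fin_gen Y -> exists i, isomorphic Y (Ms i).
Hypotheses (hd : is_dsum iota) (SX : S X).

Lemma M_split_indecomposable (D : X -> Prop) (sD : submodule D) :
  fg_submod D -> indecomposable (subm_of sD) -> M_split M D.
Proof.
move=> [t Dt] ind; have vh := val_hom sD.
have [i [f [hf [g fK gK]]]] := S_classified (S_sub vh val_inj SX) ind (subm_fin_gen sD Dt).
have hg := hom_inv hf fK gK; have hi := iota_hom hd i.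
pose e : HomR M X := exist _ _ (hom_comp (coord_hom hd i) (hom_comp hg vh)).
exists [:: (e, fun x => iota (f (to_subm sD x)))]; split=> [_ [<-|[]]|x Dx].
  split=> [x y Dx Dy|a x Dx] /=.
    by rewrite to_submD // hf.1 hi.1.
  by rewrite to_submZ // hf.2 hi.2.
by rewrite big_seq1 /= (coord_iota hd) fK to_submK.
Qed.

Lemma M_split_fg : right_artinian R -> forall D : X -> Prop, fg_submod D -> M_split M D.
Proof.
move=> art; apply: fg_submod_ind => // D fD IH; have sD := fg_submodP fD.
have [ind|] := classic (indecomposable (subm_of sD)); first exact: M_split_indecomposable.
case/(fg_not_indecomposable fD) => [D0|[A [B [[fA AD] [fB BD] AB0 DAB]]]].
  exact: M_split0.
apply: (M_split_ext (fun x => iff_sym (DAB x))).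
by apply: M_split_dsum (fg_submodP fA) (fg_submodP fB) AB0 _ _; apply: IH.
Qed.

End FiniteType.

Section Tensor.
Variables (R : nzRingType) (M X : rmodType R).
Local Notation tensor := (seq (HomR M X * M)) (only parsing).

Lemma tensor_eval_teq (l l' : tensor) : teq l l' -> tensor_eval l = tensor_eval l'.
Proof.
rewrite /tensor_eval; elim=> {l l'}.
- by [].
- by move=> l l' _ ->.
- by move=> l1 l2 l3 _ -> _ ->.
- by move=> l1 l1' l2 l2' _ e1 _ e2; rewrite !big_cat e1 e2.
- by move=> l1 l2; rewrite !big_cat; apply: addrC.
- by move=> p q r m h; rewrite !big_cons !big_nil /= h !addr0.
- by move=> p m m'; rewrite !big_cons !big_nil /= !addr0 (proj2_sig p).1.
- by move=> p m h; rewrite !big_cons !big_nil /= h addr0.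
- by move=> p; rewrite !big_cons !big_nil /= addr0 (hom0 (proj2_sig p)).
- by move=> p q s m _ h; rewrite !big_cons !big_nil /= h.
Qed.

Lemma tensor_eval_cat (l l' : tensor) :
  tensor_eval (l ++ l') = tensor_eval l + tensor_eval l'.
Proof. by rewrite /tensor_eval big_cat. Qed.

Lemma tensor_evalZ (r : R^c) (l : tensor) : tensor_eval (tscale r l) = r *: tensor_eval l.
Proof.
rewrite /tensor_eval /tscale big_map scaler_sumr; apply: eq_bigr => pm _ /=.
exact: (proj2_sig pm.1).2.
Qed.

Section TeqMap.
Variables (I : Type) (E : seq I).

Lemma teq_map (f g : I -> HomR M X * M) :
  (forall i, List.In i E -> teq [:: f i] [:: g i]) -> teq (map f E) (map g E).
Proof.
elim: E => [|i E' IH] fg /=; first exact: teq_refl.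
apply: (teq_cat (l1 := [:: f i]) (l1' := [:: g i])); first by apply: fg; left.
by apply: IH => j ?; apply: fg; right.
Qed.

Lemma teq_map_nil (f : I -> HomR M X * M) :
  (forall i, List.In i E -> teq [:: f i] [::]) -> teq (map f E) [::].
Proof.
elim: E => [|i E' IH] f0 /=; first exact: teq_refl.
apply: (teq_cat (l1 := [:: f i]) (l1' := [::])); first by apply: f0; left.
by apply: IH => j ?; apply: f0; right.
Qed.

Lemma teq_map_merge (f g h : I -> HomR M X * M) :
  (forall i, List.In i E -> teq [:: f i; g i] [:: h i]) ->
  teq (map f E ++ map g E) (map h E).
Proof.
elim: E => [|i E' IH] fgh /=; first exact: teq_refl.
apply: (@teq_trans _ _ _ _ ([:: f i; g i] ++ (map f E' ++ map g E'))).
  have -> : f i :: map f E' ++ g i :: map g E' =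
            [:: f i] ++ ((map f E' ++ [:: g i]) ++ map g E') by rewrite -catA.
  change (teq ([:: f i] ++ ((map f E' ++ [:: g i]) ++ map g E'))
              ([:: f i] ++ (([:: g i] ++ map f E') ++ map g E'))).
  by apply: teq_cat (teq_refl _) (teq_cat (teq_comm _ _) (teq_refl _)).
apply: (teq_cat (l1 := [:: f i; g i]) (l1' := [:: h i])); first by apply: fgh; left.
by apply: IH => j ?; apply: fgh; right.
Qed.

End TeqMap.

Lemma is_hom_sum (hs : seq (HomR M X)) : is_hom (fun x => \sum_(h <- hs) sval h x).
Proof.
split=> [u v|a u]; first by rewrite -big_split; apply: eq_bigr => h _; apply: (proj2_sig h).1.
by rewrite scaler_sumr; apply: eq_bigr => h _; apply: (proj2_sig h).2.
Qed.

Lemma teq_hom_sum (hs : seq (HomR M X)) (phi : HomR M X) (m : M) :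
  (forall x, sval phi x = \sum_(h <- hs) sval h x) -> teq [:: (phi, m)] [seq (h, m) | h <- hs].
Proof.
elim: hs phi => [|h hs IH] phi phiE /=.
  by apply: teq_zerol => x; rewrite phiE big_nil.
pose psi : HomR M X := exist _ _ (is_hom_sum hs).
apply: (@teq_trans _ _ _ _ [:: (h, m); (psi, m)]).
  by apply: teq_addl => x; rewrite phiE big_cons.
by apply: (teq_cat (l1 := [:: (h, m)]) (l1' := [:: (h, m)])); [apply: teq_refl | apply: IH].
Qed.

End Tensor.

Section NormalForm.
Variables (R : nzRingType) (M X : rmodType R).

Lemma is_hom_zero : is_hom (fun _ : M => 0 : X).
Proof. by split=> *; rewrite ?addr0 ?scaler0. Qed.

(* The zero homomorphism is a junk value for maps that are not homomorphisms. *)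
Definition to_hom (f : M -> X) : HomR M X :=
  if pselect (is_hom f) is left hf then exist _ f hf else exist _ _ is_hom_zero.

Lemma to_homE f : is_hom f -> sval (to_hom f) = f.
Proof. by rewrite /to_hom; case: pselect. Qed.

Variables (Y : X -> Prop) (sY : submodule Y) (E : seq (HomR M X * (X -> M))).
Hypotheses (hE : forall e, List.In e E -> hom_on Y e.2)
  (YE : forall x, Y x -> x = \sum_(e <- E) sval e.1 (e.2 x)).

(* [phi (x) m] = [sum_e (e.1 o e.2 o phi) (x) m] = [sum_e e.1 (x) e.2 (phi m)], by balancedness. *)
Lemma teq_pure_normal_form (phi : HomR M X) (m : M) : (forall m, Y (sval phi m)) ->
  teq [:: (phi, m)] [seq (e.1, e.2 (sval phi m)) | e <- E].
Proof.
move=> phiY; have [phiD phiZ] := proj2_sig phi.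
have hs e : List.In e E -> is_hom (e.2 \o sval phi).
  by move=> /hE [eD eZ]; split=> *; rewrite /= ?phiD ?phiZ ?eD ?eZ.
pose hc (e : HomR M X * (X -> M)) := to_hom (sval e.1 \o (e.2 \o sval phi)).
have hcE e : List.In e E -> sval (hc e) = sval e.1 \o (e.2 \o sval phi).
  by move=> eE; rewrite to_homE //; apply: hom_comp (hs _ eE) (proj2_sig e.1).
apply: (@teq_trans _ _ _ _ [seq (hc e, m) | e <- E]).
  rewrite (map_comp (fun h => (h, m)) hc); apply: teq_hom_sum => x.
  by rewrite big_map (YE (phiY x)); apply: eq_big_In => e eE; rewrite hcE.
apply: teq_map => e eE /=; apply: (teq_bal (s := e.2 \o sval phi)); first exact: hs.
by move=> x; rewrite hcE.
Qed.

Lemma teq_normal_form (l : seq (HomR M X * M)) :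
  (forall pm, List.In pm l -> forall m, Y (sval pm.1 m)) ->
  teq l [seq (e.1, e.2 (tensor_eval l)) | e <- E].
Proof.
elim: l => [|[phi m] l IH] lY.
  rewrite /tensor_eval big_nil; apply: teq_sym; apply: teq_map_nil => e eE /=.
  by rewrite (hom_on0 sY (hE eE)); apply: teq_zeror.
have phiY m' : Y (sval phi m') by apply: (lY (phi, m)); left.
have Yl : Y (tensor_eval l) by apply: submod_sum => // pm pml; apply: (lY pm); right.
rewrite /tensor_eval big_cons -/(tensor_eval l) /=.
apply: (@teq_trans _ _ _ _ ([seq (e.1, e.2 (sval phi m)) | e <- E] ++
                            [seq (e.1, e.2 (tensor_eval l)) | e <- E])).
  apply: (teq_cat (l1 := [:: (phi, m)])); first exact: teq_pure_normal_form.
  by apply: IH => pm pml; apply: lY; right.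
apply: teq_map_merge => e eE /=; rewrite (hE eE).1 //.
exact: teq_sym (teq_addr _ _ _).
Qed.

End NormalForm.

Section Evaluation.
Variables (R : nzRingType) (M X : rmodType R).
Hypothesis splitX : forall D : X -> Prop, fg_submod D -> M_split M D.

Lemma tensor_eval_surj x : exists l : seq (HomR M X * M), tensor_eval l = x.
Proof.
have [E [_ xE]] := splitX (ex_intro _ [:: x] (fun _ => iff_refl (rspan [:: x] _))).
exists [seq (e.1, e.2 x) | e <- E]; rewrite /tensor_eval big_map; symmetry.
by apply: xE; apply: rspan_mem; rewrite inE eqxx.
Qed.

Lemma tensor_eval_inj (tM : seq M) : (forall m, rspan tM m) ->
  forall l l' : seq (HomR M X * M), tensor_eval l = tensor_eval l' -> teq l l'.
Proof.
move=> Mt l l' ll'; pose T := flatten [seq map (sval pm.1) tM | pm <- l ++ l'].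
have lT pm : List.In pm (l ++ l') -> forall m, rspan T (sval pm.1 m).
  move=> pml m; apply: rspan_subset (rspan_hom (proj2_sig pm.1) (Mt m)) => y y_pm.
  apply/flattenP; exists (map (sval pm.1) tM) => //.
  exact: (map_f_In (fun pm : HomR M X * M => map (sval pm.1) tM)).
have [E [hE YE]] := splitX (ex_intro _ T (fun _ => iff_refl (rspan T _))).
have nf l0 : (forall pm, List.In pm l0 -> List.In pm (l ++ l')) ->
    teq l0 [seq (e.1, e.2 (tensor_eval l0)) | e <- E].
  by move=> l0l; apply: (teq_normal_form (rspan_submod T) hE YE) => pm /l0l /lT.
apply: teq_trans (nf l _) _ => [pm pml|]; first by apply: List.in_or_app; left.
by rewrite ll'; apply/teq_sym/nf => pm pml; apply: List.in_or_app; right.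
Qed.

End Evaluation.

Unset Implicit Arguments.

Theorem lemma12 (R : nzRingType) (S : lmodType R^c -> Prop)
    (n : nat) (Ms : 'I_n -> lmodType R^c)
    (M : lmodType R^c) (iota : forall i, Ms i -> M)
    (X : lmodType R^c) :
  artinian R ->
  (forall (I : Type) (Y : I -> lmodType R^c) (Z : lmodType R^c)
          (f : forall i, Y i -> Z),
      (forall i, S (Y i)) -> is_dsum f -> S Z) ->
  (forall (U V : lmodType R^c) (f : U -> V),
      is_hom f -> injective f -> S V -> S U) ->
  S (regular_rmod R) ->
  (forall i, [/\ S (Ms i), indecomposable (Ms i) & fin_gen (Ms i)]) ->
  (forall i j, isomorphic (Ms i) (Ms j) -> i = j) ->
  (forall Y : lmodType R^c, S Y -> indecomposable Y -> fin_gen Y ->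
      exists i, isomorphic Y (Ms i)) ->
  is_dsum iota ->
  S X ->
  [/\ (forall l l' : seq (HomR M X * M), teq l l' -> tensor_eval l = tensor_eval l'),
      (forall l l' : seq (HomR M X * M),
          tensor_eval (l ++ l') = tensor_eval l + tensor_eval l'),
      (forall (r : R^c) (l : seq (HomR M X * M)),
          tensor_eval (tscale r l) = r *: tensor_eval l),
      (forall x : X, exists l : seq (HomR M X * M), tensor_eval l = x)
    & (forall l l' : seq (HomR M X * M), tensor_eval l = tensor_eval l' -> teq l l')].
Proof.
move=> [art _] _ S_sub _ Ms_fg _ S_classified hd SX.
have splitX := M_split_fg S_sub S_classified hd SX art.
have [tM Mt] : exists tM : seq M, forall m, rspan tM m.
  by apply: (dsum_fin_gen hd) => i; case: (Ms_fg i).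
split; [exact: tensor_eval_teq | exact: tensor_eval_cat | exact: tensor_evalZ | |].
  exact: tensor_eval_surj.
exact: tensor_eval_inj Mt.
Qed.
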